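(* Let $n\in\mathbb{N}_+$, $n\ge 3$, and for $x\in[0,1]$ let \[ \Phi_n(x):=(n+1)\int_0^1 \left(t^2+(1-t)^2\right)\frac{(nx-3)t^2(1-t)^{n-2}-(nx-2)t^3(1-t)^{n-3}+t^{nx}(1-t)^{n(1-x)}}{(1-2t)^2}\,dt. \] Then $\Phi_n$ is convex on $[0,1]$ and \[ -\frac{4}{n}\le \Phi_n(x)\le\frac{16}{n},\quad x\in\left[\frac1n,1-\frac1n\right]. \] *)

From Stdlib Require Import Reals.
From Coquelicot Require Import Coquelicot.
Open Scope R_scope.

(* Real powers t^{nx} and (1-t)^{n(1-x)} are written with Rpower (correct for
   0 < t < 1; the endpoint values t = 0, 1 and the removable point t = 1/2
   do not affect the Riemann integral). *)
Definition Phi_integrand (n : nat) (x t : R) : R :=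
  (t ^ 2 + (1 - t) ^ 2) *
  (((INR n * x - 3) * t ^ 2 * (1 - t) ^ (n - 2)
    - (INR n * x - 2) * t ^ 3 * (1 - t) ^ (n - 3)
    + Rpower t (INR n * x) * Rpower (1 - t) (INR n * (1 - x)))
   / (1 - 2 * t) ^ 2).

Definition Phi (n : nat) (x : R) : R :=
  (INR n + 1) * RInt (Phi_integrand n x) 0 1.

Definition convex_on (f : R -> R) (a b : R) : Prop :=
  forall x y l, a <= x <= b -> a <= y <= b -> 0 <= l <= 1 ->
    f (l * x + (1 - l) * y) <= l * f x + (1 - l) * f y.

(* For fixed t the integrand is an affine function of x plus the nonnegative weight
   (t^2 + (1-t)^2) / (1-2t)^2 times exp (n x ln t + n (1-x) ln (1-t)); it is therefore convex
   in x, and integration preserves convexity.  On the grid x = k/n the power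
   t^(nx) (1-t)^(n(1-x)) becomes the monomial t^k (1-t)^(n-k): the numerator vanishes for
   k = 2, 3, and for k = 1, n - 1 it is (1-2t)^2 times a polynomial, so Phi_n is an explicit
   sum of Beta integrals, at most 4/n resp. 16/n.  Convexity spreads these values over
   [1/n, 1 - 1/n]: the chord through 1/n and 1 - 1/n gives the upper bound, and the zeros at
   2/n and 3/n, together with the value at 1/n, give the lower bound.
   The integrand is integrable because its singularity at t = 1/2 is removable: with
   L = ln (t/(1-t)) and m = n x - 2 the numerator is t^2 (1-t)^(n-2) (e^(mL) - m e^L + m - 1),
   which is L^2 times an entire function of L, while 1 - 2t = -(1-t)(e^L - 1) is L times a
   nonvanishing one. *)

From Stdlib Require Import Reals Lra Lia Factorial.
From Coquelicot Require Import Coquelicot.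
Open Scope R_scope.

Lemma exp_convex (p q l : R) : 0 <= l <= 1 ->
  exp (l * p + (1 - l) * q) <= l * exp p + (1 - l) * exp q.
Proof.
  intros Hl. set (z := l * p + (1 - l) * q).
  assert (Hp : exp z * (1 + (p - z)) <= exp p).
  { replace (exp p) with (exp z * exp (p - z)) by (rewrite <- exp_plus; f_equal; ring).
    apply Rmult_le_compat_l; [apply Rlt_le, exp_pos | apply exp_ineq1_le]. }
  assert (Hq : exp z * (1 + (q - z)) <= exp q).
  { replace (exp q) with (exp z * exp (q - z)) by (rewrite <- exp_plus; f_equal; ring).
    apply Rmult_le_compat_l; [apply Rlt_le, exp_pos | apply exp_ineq1_le]. }
  assert (Hz : l * (p - z) + (1 - l) * (q - z) = 0) by (unfold z; ring).
  assert (exp z = l * (exp z * (1 + (p - z))) + (1 - l) * (exp z * (1 + (q - z))))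
    by (transitivity (exp z * (1 + (l * (p - z) + (1 - l) * (q - z)))); [rewrite Hz |]; ring).
  destruct Hl. nra.
Qed.

Lemma convex_on_affine_exp (a b K c d lo hi : R) : 0 <= K ->
  convex_on (fun x => a + b * x + K * exp (c * x + d)) lo hi.
Proof.
  intros HK x y l _ _ Hl.
  replace (c * (l * x + (1 - l) * y) + d) with (l * (c * x + d) + (1 - l) * (c * y + d)) by ring.
  pose proof (exp_convex (c * x + d) (c * y + d) l Hl). nra.
Qed.

Lemma convex_on_scal (k : R) (f : R -> R) (a b : R) : 0 <= k ->
  convex_on f a b -> convex_on (fun x => k * f x) a b.
Proof. intros Hk Hf x y l Hx Hy Hl. pose proof (Hf x y l Hx Hy Hl). nra. Qed.

Lemma convex_on_RInt (f : R -> R -> R) (a b c d : R) : c <= d ->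
  (forall x, a <= x <= b -> ex_RInt (f x) c d) ->
  (forall t, convex_on (fun x => f x t) a b) ->
  convex_on (fun x => RInt (f x) c d) a b.
Proof.
  intros Hcd Hint Hcvx x y l Hx Hy Hl.
  assert (Hz : a <= l * x + (1 - l) * y <= b) by nra.
  assert (Hxy : is_RInt (fun t => l * f x t + (1 - l) * f y t) c d
                  (l * RInt (f x) c d + (1 - l) * RInt (f y) c d))
    by exact (is_RInt_plus _ _ _ _ _ _
                (is_RInt_scal _ _ _ l _ (RInt_correct _ _ _ (Hint x Hx)))
                (is_RInt_scal _ _ _ (1 - l) _ (RInt_correct _ _ _ (Hint y Hy)))).
  rewrite <- (is_RInt_unique _ _ _ _ Hxy).
  apply RInt_le; [exact Hcd | exact (Hint _ Hz) | eexists; exact Hxy |].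
  intros t _. exact (Hcvx t x y l Hx Hy Hl).
Qed.

Lemma convex_on_three_points (F : R -> R) (a b p q r : R) : convex_on F a b ->
  a <= p -> p <= q -> q <= r -> r <= b ->
  (r - p) * F q <= (r - q) * F p + (q - p) * F r.
Proof.
  intros HF Hap Hpq Hqr Hrb.
  destruct (Req_dec p r) as [<- | Hpr].
  - replace q with p by lra. lra.
  - set (l := (r - q) / (r - p)).
    assert (Hl : 0 <= l <= 1).
    { unfold l. split; [apply Rdiv_le_0_compat; lra |].
      apply (Rmult_le_reg_r (r - p)); [lra |]. unfold Rdiv.
      rewrite Rmult_assoc, Rinv_l by lra. lra. }
    pose proof (HF p r l ltac:(lra) ltac:(lra) Hl) as H.
    replace (l * p + (1 - l) * r) with q in H by (unfold l; field; lra).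
    replace ((r - q) * F p + (q - p) * F r) with ((r - p) * (l * F p + (1 - l) * F r))
      by (unfold l; field; lra).
    apply Rmult_le_compat_l; lra.
Qed.

Lemma convex_grid_bounds (F : R -> R) (N : R) : 3 <= N -> convex_on F 0 1 ->
  F (1 / N) <= 4 / N -> F (2 / N) = 0 -> F (3 / N) = 0 -> F (1 - 1 / N) <= 16 / N ->
  forall x, 1 / N <= x <= 1 - 1 / N -> - (4 / N) <= F x <= 16 / N.
Proof.
  intros HN HF H1 H2 H3 Hlast x Hx.
  assert (Hgrid : forall k, 0 <= k <= 3 -> 0 <= k / N <= 1).
  { intros k Hk. split; [apply Rdiv_le_0_compat; lra |].
    apply (Rmult_le_reg_r N); [lra |]. unfold Rdiv. rewrite Rmult_assoc, Rinv_l by lra. lra. }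
  pose proof (Hgrid 1 ltac:(lra)). pose proof (Hgrid 2 ltac:(lra)). pose proof (Hgrid 3 ltac:(lra)).
  assert (Hinv : 0 < 1 / N) by (apply Rdiv_lt_0_compat; lra).
  assert (Hx1 : x <= 1) by lra.
  split.
  - destruct (Rle_lt_dec x (2 / N)) as [Hx2 | Hx2];
      [| destruct (Rle_lt_dec x (3 / N)) as [Hx3 | Hx3]].
    + pose proof (convex_on_three_points F 0 1 x (2 / N) (3 / N) HF ltac:(lra) Hx2
                    ltac:(unfold Rdiv; nra) ltac:(lra)) as C.
      rewrite H2, H3 in C.
      replace (3 / N - 2 / N) with (1 / N) in C by (field; lra).
      assert (0 <= F x) by nra. lra.
    + pose proof (convex_on_three_points F 0 1 (1 / N) (2 / N) x HF ltac:(lra)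
                    ltac:(unfold Rdiv; nra) ltac:(lra) Hx1) as C.
      rewrite H2 in C.
      replace (2 / N - 1 / N) with (1 / N) in C by (field; lra).
      assert (x - 2 / N <= 1 / N) by (replace (1 / N) with (3 / N - 2 / N) by (field; lra); lra).
      destruct (Rle_lt_dec 0 (F (1 / N))); nra.
    + pose proof (convex_on_three_points F 0 1 (2 / N) (3 / N) x HF ltac:(lra)
                    ltac:(unfold Rdiv; nra) ltac:(lra) Hx1) as C.
      rewrite H2, H3 in C.
      replace (3 / N - 2 / N) with (1 / N) in C by (field; lra).
      assert (0 <= F x) by nra. lra.
  - pose proof (convex_on_three_points F 0 1 (1 / N) x (1 - 1 / N) HF ltac:(lra)
                  ltac:(lra) ltac:(lra) ltac:(lra)) as C.
    assert (4 / N <= 16 / N) by (unfold Rdiv; nra).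
    assert (1 / N < 1 - 1 / N) by (unfold Rdiv in *; nra).
    nra.
Qed.

Lemma Phi_integrand_affine_exp (n : nat) (x t : R) :
  let K := (t ^ 2 + (1 - t) ^ 2) / (1 - 2 * t) ^ 2 in
  let A := t ^ 2 * (1 - t) ^ (n - 2) in
  let B := t ^ 3 * (1 - t) ^ (n - 3) in
  Phi_integrand n x t =
  K * (2 * B - 3 * A) + K * INR n * (A - B) * x
  + K * exp (INR n * (ln t - ln (1 - t)) * x + INR n * ln (1 - t)).
Proof.
  intros K A B. unfold Phi_integrand, Rpower, K, A, B, Rdiv.
  rewrite <- exp_plus.
  replace (INR n * (ln t - ln (1 - t)) * x + INR n * ln (1 - t))
    with (INR n * x * ln t + INR n * (1 - x) * ln (1 - t)) by ring.
  ring.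
Qed.

Lemma Phi_integrand_convex (n : nat) (t : R) :
  convex_on (fun x => Phi_integrand n x t) 0 1.
Proof.
  intros x y l Hx Hy Hl. rewrite !Phi_integrand_affine_exp.
  apply (convex_on_affine_exp _ _ _ _ _ 0 1); auto.
  unfold Rdiv. apply Rmult_le_pos; [nra |].
  destruct (Req_dec (1 - 2 * t) 0) as [E | E].
  (* at t = 1/2 the weight is [/ 0 = 0] *)
  - rewrite E, pow_i, Rinv_0 by lia. lra.
  - apply Rlt_le, Rinv_0_lt_compat, pow2_gt_0, E.
Qed.

Lemma Phi_convex (n : nat) :
  (forall x, 0 <= x <= 1 -> ex_RInt (Phi_integrand n x) 0 1) ->
  convex_on (Phi n) 0 1.
Proof.
  intros Hint. apply convex_on_scal; [pose proof (pos_INR n); lra |].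
  apply convex_on_RInt; [lra | exact Hint | apply Phi_integrand_convex].
Qed.

Lemma continuous_of_ex_derive (f : R -> R) (z : R) : ex_derive f z -> continuous f z.
Proof. apply (@ex_derive_continuous R_AbsRing R_NormedModule). Qed.

Lemma ex_RInt_ext_open (f g : R -> R) (a b : R) : a <= b ->
  (forall t, a < t < b -> f t = g t) -> ex_RInt g a b -> ex_RInt f a b.
Proof.
  intros Hab Hfg. apply ex_RInt_ext.
  intros t Ht. rewrite Rmin_left, Rmax_right in Ht by lra. symmetry. apply Hfg, Ht.
Qed.

Lemma is_RInt_ext_but_point (f g : R -> R) (a c b l : R) : a <= c <= b ->
  (forall t, a < t < b -> t <> c -> f t = g t) ->
  is_RInt g a b l -> is_RInt f a b l.
Proof.
  intros Hc Hfg Hg.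
  assert (Hex : ex_RInt g a b) by (eexists; exact Hg).
  assert (Gac : ex_RInt g a c)
    by exact (@ex_RInt_Chasles_1 R_CompleteNormedModule g a c b Hc Hex).
  assert (Gcb : ex_RInt g c b)
    by exact (@ex_RInt_Chasles_2 R_CompleteNormedModule g a c b Hc Hex).
  assert (Hac : is_RInt f a c (RInt g a c)).
  { apply (is_RInt_ext g); [| exact (@RInt_correct R_CompleteNormedModule g a c Gac)].
    intros t Ht. rewrite Rmin_left, Rmax_right in Ht by lra. symmetry. apply Hfg; lra. }
  assert (Hcb : is_RInt f c b (RInt g c b)).
  { apply (is_RInt_ext g); [| exact (@RInt_correct R_CompleteNormedModule g c b Gcb)].
    intros t Ht. rewrite Rmin_left, Rmax_right in Ht by lra. symmetry. apply Hfg; lra. }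
  rewrite <- (is_RInt_unique _ _ _ _ Hg),
    <- (@RInt_Chasles R_CompleteNormedModule g a c b Gac Gcb).
  exact (is_RInt_Chasles _ _ _ _ _ _ Hac Hcb).
Qed.

Lemma is_RInt_0 (a b : R) : is_RInt (fun _ => 0) a b 0.
Proof.
  pose proof (is_RInt_const a b 0) as H.
  unfold scal in H; simpl in H; unfold mult in H; simpl in H. rewrite Rmult_0_r in H. exact H.
Qed.

Lemma is_RInt_sum_f_R0 (h : nat -> R -> R) (I : nat -> R) (a b : R) (N : nat) :
  (forall i, (i <= N)%nat -> is_RInt (h i) a b (I i)) ->
  is_RInt (fun t => sum_f_R0 (fun i => h i t) N) a b (sum_f_R0 I N).
Proof.
  induction N as [| N IH]; intros Hh; simpl.
  - apply Hh; lia.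
  - apply (is_RInt_plus (fun t => sum_f_R0 (fun i => h i t) N) (h (S N))).
    + apply IH; intros; apply Hh; lia.
    + apply Hh; lia.
Qed.

Lemma INR_fact_pos (k : nat) : 0 < INR (fact k).
Proof. apply lt_0_INR, lt_O_fact. Qed.

Definition beta_integral (p q : nat) : R :=
  INR (fact p) * INR (fact q) / INR (fact (S (p + q))).

Lemma beta_integral_pos (p q : nat) : 0 < beta_integral p q.
Proof.
  unfold beta_integral.
  pose proof (INR_fact_pos p); pose proof (INR_fact_pos q).
  pose proof (INR_fact_pos (S (p + q))).
  apply Rdiv_lt_0_compat; nra.
Qed.

Lemma beta_integral_comm (p q : nat) : beta_integral p q = beta_integral q p.
Proof. unfold beta_integral. rewrite (Nat.add_comm q p). unfold Rdiv. ring. Qed.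

Lemma beta_integral_0 (p : nat) : beta_integral p 0 = / INR (S p).
Proof.
  unfold beta_integral. rewrite Nat.add_0_r, fact_simpl, mult_INR. simpl (INR (fact 0)).
  pose proof (INR_fact_pos p). pose proof (lt_0_INR (S p) ltac:(lia)). field. lra.
Qed.

Lemma beta_integral_succ_r (p q : nat) :
  beta_integral p (S q) = INR (S q) / INR (S (S (p + q))) * beta_integral p q.
Proof.
  unfold beta_integral.
  rewrite Nat.add_succ_r, (fact_simpl q), (fact_simpl (S (p + q))), !mult_INR.
  pose proof (INR_fact_pos (S (p + q))). pose proof (lt_0_INR (S (S (p + q))) ltac:(lia)).
  field. lra.
Qed.

Lemma beta_integral_pascal (p q : nat) :
  beta_integral p (S q) = beta_integral p q - beta_integral (S p) q.
Proof.
  rewrite beta_integral_succ_r. unfold beta_integral.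
  rewrite (fact_simpl p), (fact_simpl (S p + q)), !mult_INR. simpl (S p + q)%nat.
  pose proof (INR_fact_pos (S (p + q))). rewrite !S_INR, !plus_INR.
  pose proof (pos_INR p). pose proof (pos_INR q).
  field. lra.
Qed.

Lemma is_RInt_beta (p q : nat) :
  is_RInt (fun t => t ^ p * (1 - t) ^ q) 0 1 (beta_integral p q).
Proof.
  revert p; induction q as [| q IH]; intros p.
  - rewrite beta_integral_0.
    apply (is_RInt_ext (fun t => t ^ p)); [intros t _; simpl; ring |].
    replace (/ INR (S p)) with (1 ^ S p / INR (S p) - 0 ^ S p / INR (S p)); [apply is_RInt_pow |].
    rewrite pow1, pow_i by lia. unfold Rdiv. ring.
  - rewrite beta_integral_pascal.
    apply (is_RInt_ext (fun t => t ^ p * (1 - t) ^ q - t ^ S p * (1 - t) ^ q)).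
    + intros t _. simpl. ring.
    + exact (is_RInt_minus _ _ _ _ _ _ (IH p) (IH (S p))).
Qed.

Lemma beta_integral_1 (p : nat) : beta_integral p 1 = / ((INR p + 1) * (INR p + 2)).
Proof.
  rewrite beta_integral_succ_r, beta_integral_0, Nat.add_0_r, !S_INR.
  pose proof (pos_INR p). simpl. field. lra.
Qed.

Lemma beta_integral_2 (p : nat) :
  beta_integral p 2 = 2 / ((INR p + 1) * (INR p + 2) * (INR p + 3)).
Proof.
  rewrite beta_integral_succ_r, beta_integral_1, Nat.add_1_r, !S_INR.
  pose proof (pos_INR p). simpl. field. lra.
Qed.

Lemma beta_integral_3 (p : nat) :
  beta_integral p 3 = 6 / ((INR p + 1) * (INR p + 2) * (INR p + 3) * (INR p + 4)).
Proof.
  rewrite beta_integral_succ_r, beta_integral_2, !S_INR, plus_INR.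
  pose proof (pos_INR p). simpl. field. lra.
Qed.

Lemma fact_add_mul_le (a b c : nat) :
  (fact (a + c) * fact (b + c) <= fact c * fact (a + b + c))%nat.
Proof.
  induction a as [| a IH]; [simpl; lia |].
  change (S a + c)%nat with (S (a + c)). change (S a + b + c)%nat with (S (a + b + c)).
  rewrite !fact_simpl. nia.
Qed.

Lemma beta_integral_le_3 (p q : nat) : (3 <= p)%nat -> (3 <= q)%nat ->
  beta_integral p q <= beta_integral (p + q - 3) 3.
Proof.
  intros Hp Hq. unfold beta_integral.
  replace (S (p + q - 3 + 3)) with (S (p + q)) by lia.
  unfold Rdiv. apply Rmult_le_compat_r; [apply Rlt_le, Rinv_0_lt_compat, INR_fact_pos |].
  rewrite <- !mult_INR. apply le_INR.
  pose proof (fact_add_mul_le (p - 3) (q - 3) 3) as H.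
  replace (p - 3 + 3)%nat with p in H by lia. replace (q - 3 + 3)%nat with q in H by lia.
  replace (p - 3 + (q - 3) + 3)%nat with (p + q - 3)%nat in H by lia.
  simpl (fact 3) in *. lia.
Qed.

Definition exp_coef (k : nat) : R := / INR (fact k).

Definition exp_phi1 (z : R) : R := PSeries (PS_decr_1 exp_coef) z.

Definition exp_phi2 (z : R) : R := PSeries (PS_decr_1 (PS_decr_1 exp_coef)) z.

Lemma CV_radius_exp_coef : CV_radius exp_coef = p_infty.
Proof.
  apply CV_radius_infinite_DAlembert.
  - intros k. apply Rinv_neq_0_compat. pose proof (INR_fact_pos k). lra.
  - apply (is_lim_seq_ext (fun k => / INR (S k))).
    + intros k. unfold exp_coef. rewrite fact_simpl, mult_INR.
      pose proof (INR_fact_pos k). pose proof (lt_0_INR (S k) ltac:(lia)).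
      rewrite Rabs_pos_eq; [field; lra |].
      apply Rlt_le, Rdiv_lt_0_compat; apply Rinv_0_lt_compat; nra.
    + replace (Finite 0) with (Rbar_inv p_infty) by reflexivity.
      apply is_lim_seq_inv; [| discriminate].
      apply (is_lim_seq_incr_1 INR p_infty), is_lim_seq_INR.
Qed.

Lemma exp_phi1_spec (z : R) : exp z = 1 + z * exp_phi1 z.
Proof.
  rewrite exp_Reals. fold exp_coef. rewrite PSeries_decr_1.
  - unfold exp_coef. simpl. rewrite Rinv_1. reflexivity.
  - apply CV_radius_inside. rewrite CV_radius_exp_coef. exact I.
Qed.

Lemma exp_phi1_phi2 (z : R) : exp_phi1 z = 1 + z * exp_phi2 z.
Proof.
  unfold exp_phi1, exp_phi2. rewrite PSeries_decr_1.
  - unfold PS_decr_1, exp_coef. simpl. rewrite Rinv_1. reflexivity.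
  - apply CV_radius_inside. rewrite CV_radius_decr_1, CV_radius_exp_coef. exact I.
Qed.

Lemma exp_phi2_spec (z : R) : exp z = 1 + z + z ^ 2 * exp_phi2 z.
Proof. rewrite exp_phi1_spec, exp_phi1_phi2. ring. Qed.

Lemma ex_derive_exp_phi1 (z : R) : ex_derive exp_phi1 z.
Proof.
  apply ex_derive_PSeries. rewrite CV_radius_decr_1, CV_radius_exp_coef. exact I.
Qed.

Lemma ex_derive_exp_phi2 (z : R) : ex_derive exp_phi2 z.
Proof.
  apply ex_derive_PSeries. rewrite !CV_radius_decr_1, CV_radius_exp_coef. exact I.
Qed.

Lemma exp_phi1_pos (z : R) : 0 < exp_phi1 z.
Proof.
  pose proof (exp_phi1_spec z) as E.
  destruct (Rtotal_order z 0) as [Hz | [-> | Hz]].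
  - assert (exp z < 1) by (rewrite <- exp_0; apply exp_increasing, Hz). nra.
  - unfold exp_phi1. rewrite PSeries_0. unfold PS_decr_1, exp_coef. simpl. lra.
  - assert (1 + z < exp z) by (apply exp_ineq1; lra). nra.
Qed.

Lemma exp_second_difference (m L : R) :
  exp (m * L) - m * exp L + (m - 1) = L ^ 2 * (m ^ 2 * exp_phi2 (m * L) - m * exp_phi2 L).
Proof. rewrite !exp_phi2_spec. ring. Qed.

Definition logit (t : R) : R := ln t - ln (1 - t).

Lemma exp_logit (t : R) : 0 < t < 1 -> exp (logit t) = t / (1 - t).
Proof.
  intros Ht. unfold logit, Rminus at 1. rewrite exp_plus, exp_Ropp, !exp_ln by lra.
  reflexivity.
Qed.

Lemma one_sub_twice_logit (t : R) : 0 < t < 1 ->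
  1 - 2 * t = - ((1 - t) * logit t * exp_phi1 (logit t)).
Proof.
  intros Ht. replace ((1 - t) * logit t * exp_phi1 (logit t))
    with ((1 - t) * (exp (logit t) - 1)) by (rewrite exp_phi1_spec; ring).
  rewrite exp_logit by exact Ht. field. lra.
Qed.

Lemma Phi_numerator_logit (n : nat) (x t : R) : (3 <= n)%nat -> 0 < t < 1 ->
  let m := INR n * x - 2 in
  (INR n * x - 3) * t ^ 2 * (1 - t) ^ (n - 2)
  - (INR n * x - 2) * t ^ 3 * (1 - t) ^ (n - 3)
  + Rpower t (INR n * x) * Rpower (1 - t) (INR n * (1 - x))
  = t ^ 2 * (1 - t) ^ (n - 2) * (exp (m * logit t) - m * exp (logit t) + (m - 1)).
Proof.
  intros hn Ht m.
  assert (Hu : 0 < 1 - t) by lra.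
  assert (Hpow : Rpower t (INR n * x) * Rpower (1 - t) (INR n * (1 - x))
                 = Rpower (1 - t) (INR n) * (exp (logit t) ^ 2 * exp (m * logit t))).
  { unfold Rpower, logit, m. rewrite <- exp_plus. simpl. rewrite Rmult_1_r, <- !exp_plus.
    f_equal. ring. }
  assert (En : (1 - t) ^ n = (1 - t) ^ 3 * (1 - t) ^ (n - 3))
    by (rewrite <- pow_add; f_equal; lia).
  assert (En2 : (1 - t) ^ (n - 2) = (1 - t) * (1 - t) ^ (n - 3))
    by (replace (n - 2)%nat with (S (n - 3)) by lia; reflexivity).
  rewrite Hpow, Rpower_pow, exp_logit, En, En2 by assumption.
  unfold m. field. lra.
Qed.

(* [Phi_integrand] rewritten in terms of [L = logit t]: the factor [L^2] of the numerator
   cancels against [(1 - 2 t)^2 = (1 - t)^2 L^2 exp_phi1 L ^ 2]. *)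
Definition Phi_integrand_reg (n : nat) (x t : R) : R :=
  let m := INR n * x - 2 in
  let L := logit t in
  (t ^ 2 + (1 - t) ^ 2) * (1 - t) ^ (n - 2) * exp (2 * L)
  * (m ^ 2 * exp_phi2 (m * L) - m * exp_phi2 L) / exp_phi1 L ^ 2.

Lemma Phi_integrand_regE (n : nat) (x t : R) : (3 <= n)%nat -> 0 < t < 1 -> t <> 1 / 2 ->
  Phi_integrand n x t = Phi_integrand_reg n x t.
Proof.
  intros hn Ht Hh. unfold Phi_integrand, Phi_integrand_reg.
  rewrite Phi_numerator_logit, exp_second_difference, one_sub_twice_logit by assumption.
  set (L := logit t).
  assert (HL : L <> 0) by (intros E; apply Hh; pose proof (one_sub_twice_logit t Ht) as E2;
                          fold L in E2; rewrite E in E2; lra).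
  pose proof (exp_phi1_pos L).
  replace (exp (2 * L)) with ((t / (1 - t)) ^ 2)
    by (rewrite <- exp_logit by exact Ht; fold L; replace (2 * L) with (L + L) by ring;
        rewrite exp_plus; ring).
  field. repeat split; lra.
Qed.

Lemma continuous_Phi_integrand_reg (n : nat) (x z : R) : 0 < z < 1 ->
  continuous (Phi_integrand_reg n x) z.
Proof.
  intros Hz. apply continuous_of_ex_derive.
  unfold Phi_integrand_reg, logit. auto_derive.
  repeat split; try lra; try apply ex_derive_exp_phi1; try apply ex_derive_exp_phi2.
  pose proof (exp_phi1_pos (ln z - ln (1 - z))). unfold Rminus in *. nra.
Qed.

(* [Rpower 0 a = exp (a * ln 0) = 1] since [ln 0 = 0]; for [a >= 0], [Rpower_ext a] is the
   continuous extension of [t |-> t ^ a] by [0 ^ a] (and by that value on t < 0). *)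
Definition Rpower_ext (a t : R) : R :=
  if Rlt_dec 0 t then Rpower t a else if Req_EM_T a 0 then 1 else 0.

Lemma continuous_Rpower_ext_pos (a z : R) : 0 < z -> continuous (Rpower_ext a) z.
Proof.
  intros Hz. apply (continuous_ext_loc _ (fun t => Rpower t a)).
  - exists (mkposreal z Hz). intros y Hy. unfold Rpower_ext.
    destruct (Rlt_dec 0 y) as [_ | Hy0]; [reflexivity |].
    exfalso. apply Hy0. unfold ball in Hy; simpl in Hy.
    unfold AbsRing_ball, abs, minus, plus, opp in Hy; simpl in Hy. apply Rabs_def2 in Hy. lra.
  - apply continuous_of_ex_derive. unfold Rpower. auto_derive. lra.
Qed.

Lemma continuous_Rpower_ext_0 (a : R) : 0 < a -> continuous (Rpower_ext a) 0.
Proof.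
  intros Ha. apply continuity_pt_filterlim. intros eps Heps.
  exists (Rpower eps (/ a)). split; [apply exp_pos |].
  intros y [_ Hy]. simpl in *. unfold R_dist in *. rewrite Rminus_0_r in Hy.
  unfold Rpower_ext. destruct (Rlt_dec 0 0) as [h | _]; [lra |].
  destruct (Req_EM_T a 0) as [h | _]; [lra |].
  destruct (Rlt_dec 0 y) as [Hy0 | _].
  - rewrite Rminus_0_r, Rabs_pos_eq by apply Rlt_le, exp_pos.
    rewrite Rabs_pos_eq in Hy by lra.
    replace eps with (Rpower (Rpower eps (/ a)) a)
      by (rewrite Rpower_mult, Rinv_l by lra; apply Rpower_1, Heps).
    apply Rlt_Rpower_l; lra.
  - rewrite Rminus_0_r, Rabs_R0. exact Heps.
Qed.

Lemma continuous_Rpower_ext (a z : R) : 0 <= a -> 0 <= z -> continuous (Rpower_ext a) z.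
Proof.
  intros Ha Hz. destruct (Rle_lt_or_eq_dec 0 z Hz) as [Hz' | <-].
  - apply continuous_Rpower_ext_pos, Hz'.
  - destruct (Rle_lt_or_eq_dec 0 a Ha) as [Ha' | <-].
    + apply continuous_Rpower_ext_0, Ha'.
    + apply (continuous_ext (fun _ => 1)); [| apply continuous_const].
      intros t. unfold Rpower_ext. destruct (Rlt_dec 0 t).
      * unfold Rpower. rewrite Rmult_0_l, exp_0. reflexivity.
      * destruct (Req_EM_T 0 0); [reflexivity | congruence].
Qed.

Lemma ex_RInt_plus_mul_Rpower_ext (f g h : R -> R) (a c d : R) : 0 <= a ->
  (forall z, Rmin c d <= z <= Rmax c d ->
     continuous f z /\ continuous g z /\ continuous h z /\ 0 <= h z) ->
  ex_RInt (fun t => f t + g t * Rpower_ext a (h t)) c d.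
Proof.
  intros Ha Hcont. apply (@ex_RInt_continuous R_CompleteNormedModule).
  intros z Hz. destruct (Hcont z Hz) as (Hf & Hg & Hh & Hh0).
  apply (continuous_plus f), (continuous_mult g); [exact Hf | exact Hg |].
  apply (continuous_comp h (Rpower_ext a)); [exact Hh |].
  apply continuous_Rpower_ext; assumption.
Qed.

Lemma ex_RInt_Phi_integrand_left (n : nat) (x : R) : 0 <= x ->
  ex_RInt (Phi_integrand n x) 0 (1 / 4).
Proof.
  intros Hx.
  apply (ex_RInt_ext_open _ (fun t =>
     (t ^ 2 + (1 - t) ^ 2) * ((INR n * x - 3) * t ^ 2 * (1 - t) ^ (n - 2)
        - (INR n * x - 2) * t ^ 3 * (1 - t) ^ (n - 3)) / (1 - 2 * t) ^ 2
     + (t ^ 2 + (1 - t) ^ 2) * Rpower (1 - t) (INR n * (1 - x)) / (1 - 2 * t) ^ 2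
       * Rpower_ext (INR n * x) t)).
  - lra.
  - intros t Ht. unfold Phi_integrand, Rpower_ext. destruct (Rlt_dec 0 t) as [_ | H]; [| lra].
    unfold Rdiv. ring.
  - apply ex_RInt_plus_mul_Rpower_ext; [pose proof (pos_INR n); nra |].
    intros z Hz. rewrite Rmin_left, Rmax_right in Hz by lra.
    repeat split; try lra; apply continuous_of_ex_derive; unfold Rpower; auto_derive;
      repeat split; nra.
Qed.

Lemma ex_RInt_Phi_integrand_right (n : nat) (x : R) : x <= 1 ->
  ex_RInt (Phi_integrand n x) (3 / 4) 1.
Proof.
  intros Hx.
  apply (ex_RInt_ext_open _ (fun t =>
     (t ^ 2 + (1 - t) ^ 2) * ((INR n * x - 3) * t ^ 2 * (1 - t) ^ (n - 2)
        - (INR n * x - 2) * t ^ 3 * (1 - t) ^ (n - 3)) / (1 - 2 * t) ^ 2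
     + (t ^ 2 + (1 - t) ^ 2) * Rpower t (INR n * x) / (1 - 2 * t) ^ 2
       * Rpower_ext (INR n * (1 - x)) (1 - t))).
  - lra.
  - intros t Ht. unfold Phi_integrand, Rpower_ext.
    destruct (Rlt_dec 0 (1 - t)) as [_ | H]; [| lra].
    unfold Rdiv. ring.
  - apply ex_RInt_plus_mul_Rpower_ext; [pose proof (pos_INR n); nra |].
    intros z Hz. rewrite Rmin_left, Rmax_right in Hz by lra.
    repeat split; try lra; apply continuous_of_ex_derive; unfold Rpower; auto_derive;
      repeat split; nra.
Qed.

Lemma ex_RInt_Phi_integrand_middle (n : nat) (x : R) : (3 <= n)%nat ->
  ex_RInt (Phi_integrand n x) (1 / 4) (3 / 4).
Proof.
  intros hn. exists (RInt (Phi_integrand_reg n x) (1 / 4) (3 / 4)).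
  apply (is_RInt_ext_but_point _ (Phi_integrand_reg n x) _ (1 / 2)); [lra | |].
  - intros t Ht Hh. apply Phi_integrand_regE; [exact hn | lra | exact Hh].
  - apply (@RInt_correct R_CompleteNormedModule), (@ex_RInt_continuous R_CompleteNormedModule).
    intros z Hz. rewrite Rmin_left, Rmax_right in Hz by lra.
    apply continuous_Phi_integrand_reg. lra.
Qed.

Lemma ex_RInt_Phi_integrand (n : nat) (x : R) : (3 <= n)%nat -> 0 <= x <= 1 ->
  ex_RInt (Phi_integrand n x) 0 1.
Proof.
  intros hn Hx.
  apply (ex_RInt_Chasles _ _ (1 / 4)); [apply ex_RInt_Phi_integrand_left; lra |].
  apply (ex_RInt_Chasles _ _ (3 / 4)); [apply ex_RInt_Phi_integrand_middle, hn |].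
  apply ex_RInt_Phi_integrand_right; lra.
Qed.

Lemma Phi_of_is_RInt (n : nat) (x l : R) (g : R -> R) :
  (forall t, 0 < t < 1 -> t <> 1 / 2 -> Phi_integrand n x t = g t) ->
  is_RInt g 0 1 l -> Phi n x = (INR n + 1) * l.
Proof.
  intros Hfg Hg. unfold Phi. f_equal.
  apply is_RInt_unique, (is_RInt_ext_but_point _ g 0 (1 / 2)); [lra | exact Hfg | exact Hg].
Qed.

Lemma is_RInt_beta_plus (p q p' q' : nat) :
  is_RInt (fun t => t ^ p * (1 - t) ^ q + t ^ p' * (1 - t) ^ q') 0 1
    (beta_integral p q + beta_integral p' q').
Proof. exact (is_RInt_plus _ _ _ _ _ _ (is_RInt_beta p q) (is_RInt_beta p' q')). Qed.

Lemma Phi_integrand_grid (n k : nat) (x t : R) : (k <= n)%nat -> INR n * x = INR k -> 0 < t < 1 ->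
  Phi_integrand n x t =
  (t ^ 2 + (1 - t) ^ 2) * (((INR k - 3) * t ^ 2 * (1 - t) ^ (n - 2)
    - (INR k - 2) * t ^ 3 * (1 - t) ^ (n - 3) + t ^ k * (1 - t) ^ (n - k)) / (1 - 2 * t) ^ 2).
Proof.
  intros Hk Hx Ht. unfold Phi_integrand.
  replace (INR n * (1 - x)) with (INR (n - k)) by (rewrite minus_INR by exact Hk; lra).
  rewrite Hx, !Rpower_pow by lra. reflexivity.
Qed.

Lemma Phi_at_2 (n : nat) : (3 <= n)%nat -> Phi n (2 / INR n) = 0.
Proof.
  intros hn. rewrite <- (Rmult_0_r (INR n + 1)).
  apply (Phi_of_is_RInt _ _ _ (fun _ => 0)); [| apply is_RInt_0].
  intros t Ht _. rewrite (Phi_integrand_grid n 2); [| lia | | exact Ht].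
  - simpl. unfold Rdiv. ring.
  - simpl. field. apply not_0_INR. lia.
Qed.

Lemma Phi_at_3 (n : nat) : (3 <= n)%nat -> Phi n (3 / INR n) = 0.
Proof.
  intros hn. rewrite <- (Rmult_0_r (INR n + 1)).
  apply (Phi_of_is_RInt _ _ _ (fun _ => 0)); [| apply is_RInt_0].
  intros t Ht _. rewrite (Phi_integrand_grid n 3); [| lia | | exact Ht].
  - simpl. unfold Rdiv. ring.
  - simpl. field. apply not_0_INR. lia.
Qed.

Lemma Phi_integrand_at_1 (n : nat) (t : R) : (3 <= n)%nat -> 0 < t < 1 -> t <> 1 / 2 ->
  Phi_integrand n (1 / INR n) t = t ^ 3 * (1 - t) ^ (n - 3) + t ^ 1 * (1 - t) ^ (n - 1).
Proof.
  intros hn Ht Hh.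
  rewrite (Phi_integrand_grid n 1); [| lia | simpl; field; apply not_0_INR; lia | exact Ht].
  replace (n - 2)%nat with (1 + (n - 3))%nat by lia.
  replace (n - 1)%nat with (2 + (n - 3))%nat by lia.
  rewrite !pow_add. simpl (INR 1).
  assert (1 - 2 * t <> 0) by (intros E; apply Hh; lra).
  field. assumption.
Qed.

Lemma Phi_at_1 (n : nat) : (3 <= n)%nat -> Phi n (1 / INR n) <= 4 / INR n.
Proof.
  intros hn.
  rewrite (Phi_of_is_RInt n _ _ _ (fun t => Phi_integrand_at_1 n t hn)
             (is_RInt_beta_plus 3 (n - 3) 1 (n - 1))).
  rewrite (beta_integral_comm 3), (beta_integral_comm 1),
    beta_integral_3, beta_integral_1, !minus_INR by lia.
  assert (HN : 3 <= INR n) by (apply (le_INR 3) in hn; simpl in hn; lra).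
  set (N := INR n) in *. simpl (INR 3); simpl (INR 1).
  match goal with |- ?lhs <= _ =>
    replace lhs with ((6 / ((N - 2) * (N - 1)) + 1) / N) by (field; lra) end.
  unfold Rdiv. apply Rmult_le_compat_r; [apply Rlt_le, Rinv_0_lt_compat; lra |].
  apply (Rmult_le_reg_r ((N - 2) * (N - 1))); [nra |].
  rewrite Rmult_plus_distr_r, Rmult_assoc, Rinv_l by nra. nra.
Qed.

Lemma sum_f_R0_point_mass (j N : nat) (c : R) :
  sum_f_R0 (fun i => if Nat.eqb i j then c else 0) N = if Nat.leb j N then c else 0.
Proof.
  induction N as [| N IH]; cbn [sum_f_R0].
  - destruct j; reflexivity.
  - rewrite IH. destruct (Nat.eqb_spec (S N) j), (Nat.leb_spec j N), (Nat.leb_spec j (S N));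
      try lia; cbv iota; ring.
Qed.

Lemma sum_f_R0_point_mass_le (j N : nat) (c : R) : 0 <= c ->
  sum_f_R0 (fun i => if Nat.eqb i j then c else 0) N <= c.
Proof. intros Hc. rewrite sum_f_R0_point_mass. destruct (Nat.leb j N); lra. Qed.

Section LastBetaSum.

Variable M : nat.

(* Only the terms with an exponent below 3 escape [beta_integral_le_3]: i = 1, 2 on the left,
   i = M on the right. *)
Lemma last_sum_left_term_le (i : nat) : (i <= M)%nat ->
  INR i * beta_integral (M + 4 - i) i <=
  (if Nat.eqb i 1 then beta_integral (M + 3) 1 else 0)
  + (if Nat.eqb i 2 then 2 * beta_integral (M + 2) 2 else 0)
  + INR i * beta_integral (M + 1) 3.
Proof.
  intros Hi. pose proof (beta_integral_pos (M + 1) 3).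
  destruct i as [| [| [| i]]]; simpl Nat.eqb; cbv iota.
  - simpl. lra.
  - replace (M + 4 - 1)%nat with (M + 3)%nat by lia. simpl INR. lra.
  - replace (M + 4 - 2)%nat with (M + 2)%nat by lia. simpl INR. lra.
  - rewrite !Rplus_0_l. apply Rmult_le_compat_l; [apply pos_INR |].
    eapply Rle_trans; [apply beta_integral_le_3; lia | right; f_equal; lia].
Qed.

Lemma last_sum_right_term_le (i : nat) : (i <= M)%nat ->
  INR i * beta_integral (M + 2 - i) (i + 2) <=
  (if Nat.eqb i M then INR M * beta_integral (M + 2) 2 else 0)
  + INR i * beta_integral (M + 1) 3.
Proof.
  intros Hi. pose proof (beta_integral_pos (M + 1) 3).
  destruct (Nat.eqb_spec i M) as [-> | HiM].
  - replace (M + 2 - M)%nat with 2%nat by lia. rewrite beta_integral_comm.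
    pose proof (pos_INR M). nra.
  - rewrite Rplus_0_l. destruct i as [| i]; [simpl; lra |].
    apply Rmult_le_compat_l; [apply pos_INR |].
    eapply Rle_trans; [apply beta_integral_le_3; lia | right; f_equal; lia].
Qed.

Lemma last_beta_sum_le :
  sum_f_R0 (fun i =>
    INR i * (beta_integral (M + 4 - i) i + beta_integral (M + 2 - i) (i + 2))) M
  <= beta_integral (M + 3) 1 + (INR M + 2) * beta_integral (M + 2) 2
     + INR M * (INR M + 1) * beta_integral (M + 1) 3.
Proof.
  pose proof (beta_integral_pos (M + 3) 1). pose proof (beta_integral_pos (M + 2) 2).
  pose proof (beta_integral_pos (M + 1) 3). pose proof (pos_INR M).
  eapply Rle_trans.
  { apply (sum_Rle _ (fun i =>
      (if Nat.eqb i 1 then beta_integral (M + 3) 1 else 0)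
      + (if Nat.eqb i 2 then 2 * beta_integral (M + 2) 2 else 0)
      + (if Nat.eqb i M then INR M * beta_integral (M + 2) 2 else 0)
      + INR i * (2 * beta_integral (M + 1) 3))).
    intros i Hi.
    pose proof (last_sum_left_term_le i Hi). pose proof (last_sum_right_term_le i Hi). lra. }
  rewrite !plus_sum, <- scal_sum, sum_INR.
  pose proof (sum_f_R0_point_mass_le 1 M (beta_integral (M + 3) 1) ltac:(lra)).
  pose proof (sum_f_R0_point_mass_le 2 M (2 * beta_integral (M + 2) 2) ltac:(lra)).
  pose proof (sum_f_R0_point_mass_le M M (INR M * beta_integral (M + 2) 2) ltac:(nra)).
  lra.
Qed.

End LastBetaSum.

Lemma last_beta_sum_bound (M : nat) :
  (INR (M + 4) + 1)
  * sum_f_R0 (fun i =>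
      INR i * (beta_integral (M + 4 - i) i + beta_integral (M + 2 - i) (i + 2))) M
  <= 16 / INR (M + 4).
Proof.
  eapply Rle_trans.
  { apply Rmult_le_compat_l; [pose proof (pos_INR (M + 4)); lra | apply last_beta_sum_le]. }
  rewrite beta_integral_1, beta_integral_2, beta_integral_3, !plus_INR.
  simpl (INR 1); simpl (INR 2); simpl (INR 3); simpl (INR 4).
  set (K := INR M). assert (HK : 0 <= K) by apply pos_INR.
  match goal with |- ?lhs <= ?rhs =>
    replace lhs with ((9 * K ^ 2 + 19 * K + 14) / ((K + 2) * (K + 3) * (K + 4))) by (field; lra);
    replace rhs with (16 * (K + 2) * (K + 3) / ((K + 2) * (K + 3) * (K + 4))) by (field; lra)
  end.
  unfold Rdiv. apply Rmult_le_compat_r; [apply Rlt_le, Rinv_0_lt_compat; nra | nra].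
Qed.

Lemma last_numerator_factor (M : nat) (t u : R) :
  INR M * t ^ 2 * u ^ (M + 2) - INR (S M) * t ^ 3 * u ^ (M + 1) + t ^ (M + 3) * u
  = (u - t) ^ 2 * sum_f_R0 (fun i => INR i * t ^ (M + 2 - i) * u ^ i) M.
Proof.
  induction M as [| M IH]; [simpl; ring |].
  cbn [sum_f_R0].
  replace (sum_f_R0 (fun i => INR i * t ^ (S M + 2 - i) * u ^ i) M)
    with (t * sum_f_R0 (fun i => INR i * t ^ (M + 2 - i) * u ^ i) M).
  2:{ rewrite scal_sum. apply sum_eq. intros i Hi.
      replace (S M + 2 - i)%nat with (S (M + 2 - i)) by lia. simpl. ring. }
  replace (S M + 2 - S M)%nat with 2%nat by lia.
  set (F := sum_f_R0 (fun i => INR i * t ^ (M + 2 - i) * u ^ i) M) in *.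
  replace ((u - t) ^ 2 * (t * F + INR (S M) * t ^ 2 * u ^ S M))
    with (t * ((u - t) ^ 2 * F) + (u - t) ^ 2 * INR (S M) * t ^ 2 * u ^ S M) by ring.
  rewrite <- IH.
  replace (S M + 2)%nat with (M + 3)%nat by lia.
  replace (S M + 1)%nat with (M + 2)%nat by lia.
  replace (S M + 3)%nat with (M + 4)%nat by lia.
  rewrite !pow_add, !S_INR. simpl (u ^ S M). ring.
Qed.

Lemma Phi_integrand_at_last (M : nat) (t : R) : 0 < t < 1 -> t <> 1 / 2 ->
  Phi_integrand (M + 4) (1 - 1 / INR (M + 4)) t =
  sum_f_R0 (fun i => INR i * (t ^ (M + 4 - i) * (1 - t) ^ i
                              + t ^ (M + 2 - i) * (1 - t) ^ (i + 2))) M.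
Proof.
  intros Ht Hh.
  rewrite (Phi_integrand_grid (M + 4) (M + 3)); [| lia | | exact Ht].
  2:{ rewrite !plus_INR. simpl. pose proof (pos_INR M). field. lra. }
  replace (INR (M + 3) - 3) with (INR M) by (rewrite plus_INR; simpl; ring).
  replace (INR (M + 3) - 2) with (INR (S M)) by (rewrite plus_INR, S_INR; simpl; ring).
  replace (M + 4 - 2)%nat with (M + 2)%nat by lia.
  replace (M + 4 - 3)%nat with (M + 1)%nat by lia.
  replace (M + 4 - (M + 3))%nat with 1%nat by lia.
  rewrite pow_1, last_numerator_factor.
  assert (1 - t - t <> 0) by (intros E; apply Hh; lra).
  replace (1 - 2 * t) with (1 - t - t) by ring.
  replace ((1 - t - t) ^ 2 * sum_f_R0 (fun i => INR i * t ^ (M + 2 - i) * (1 - t) ^ i) M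
           / (1 - t - t) ^ 2)
    with (sum_f_R0 (fun i => INR i * t ^ (M + 2 - i) * (1 - t) ^ i) M) by (field; assumption).
  rewrite scal_sum. apply sum_eq. intros i Hi.
  replace (M + 4 - i)%nat with (M + 2 - i + 2)%nat by lia.
  rewrite !pow_add. ring.
Qed.

Lemma Phi_at_last (n : nat) : (3 <= n)%nat -> Phi n (1 - 1 / INR n) <= 16 / INR n.
Proof.
  intros hn. destruct (Nat.eq_dec n 3) as [-> | Hn3].
  - replace (1 - 1 / INR 3) with (2 / INR 3) by (simpl; field).
    rewrite Phi_at_2 by lia. simpl. lra.
  - replace n with (n - 4 + 4)%nat by lia. set (M := (n - 4)%nat).
    rewrite (Phi_of_is_RInt _ _ _ _ (Phi_integrand_at_last M)
      (is_RInt_sum_f_R0 _ _ 0 1 M (fun i _ => is_RInt_scal _ _ _ (INR i) _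
                                      (is_RInt_beta_plus (M + 4 - i) i (M + 2 - i) (i + 2))))).
    apply last_beta_sum_bound.
Qed.

Theorem proposition3p4 (n : nat) (hn : (3 <= n)%nat) :
  convex_on (Phi n) 0 1 /\
  (forall x, 1 / INR n <= x <= 1 - 1 / INR n ->
     - (4 / INR n) <= Phi n x <= 16 / INR n).
Proof.
  assert (Hcvx : convex_on (Phi n) 0 1).
  { apply Phi_convex. intros x Hx. apply ex_RInt_Phi_integrand; assumption. }
  split; [exact Hcvx |].
  apply convex_grid_bounds; auto using Phi_at_1, Phi_at_2, Phi_at_3, Phi_at_last.
  apply (le_INR 3) in hn. simpl in hn. lra.
Qed.
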